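(* Consider the remote control problem described in the context. Without any loss of optimality, at each time $t$ the knowledge of the encoder can be summarized by the tuple $\langle s_t,\Delta_t,s_{t-\Delta_t}\rangle$ and the knowledge of the decoder by the tuple $\langle \Delta_t,s_{t-\Delta_t}\rangle$. That is, restricting the encoder's communication policy to be a function of $\langle s_t,\Delta_t,s_{t-\Delta_t}\rangle$ and the decoder's control policy to be a function of $\langle \Delta_t,s_{t-\Delta_t}\rangle$ does not decrease the optimal value of the objective $\mathbb{E}\big[\sum_{t=0}^\infty \gamma^t (r_t-\beta c_t)\big]$ compared with general causal policies.
   Context: Let $\mathcal{S}$ be a finite state set, $\mathcal{A}$ a finite set of control actions, and for each $a\in\mathcal{A}$ let $\mathbf{P}^a$ be an $|\mathcal{S}|\times|\mathcal{S}|$ stochastic matrix ($P^a_{s,s'}$ is the probability of moving from $s$ to $s'$ under action $a$). Let $r:\mathcal{S}\times\mathcal{A}\times\mathcal{S}\to\mathbb{R}$ be a reward function, written $r_{s,s'}(a)$, let $\gamma\in[0,1)$ be a discount factor and $\beta>0$ a communication cost. A Markov process $s_0,s_1,\dots$ evolves with $s_{t+1}\sim P^{a_t}_{s_t,\cdot}$. At each time $t$ an encoder observes $s_t$ and chooses $c_t\in\{0,1\}$; the decoder then observes $o_t=s_t$ if $c_t=1$ and $o_t=\chi$ (a symbol meaning ''no transmission'') if $c_t=0$, and chooses a control action $a_t\in\mathcal{A}$; the reward is $r_t=r_{s_t,s_{t+1}}(a_t)$. Policies are causal: the encoder's decision at time $t$ may depend on everything it has observed up to time $t$ (states $s_{0:t}$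 and past decoder observations), and the decoder's action may depend on its observations $o_{0:t}$ and its past actions. The objective is to maximize $\mathbb{E}\big[\sum_{t=0}^\infty\gamma^t(r_t-\beta c_t)\big]$. $\Delta_t$ denotes the time elapsed since the last transmission (so $s_{t-\Delta_t}$ is the last state transmitted to the decoder). *)

From HB Require Import structures.
From mathcomp Require Import all_boot all_order all_algebra.
From mathcomp Require Import all_classical all_reals all_analysis.
Set Implicit Arguments. Unset Strict Implicit. Unset Printing Implicit Defensive.
Import Order.TTheory GRing.Theory Num.Theory numFieldNormedType.Exports.
Local Open Scope ring_scope.

Section RemoteControl.
Variables (R : realType) (S A : finType).

(* Decoder observations o_i for past states hs = s_0..s_k and encoder
   decisions cs = c_0..c_k : Some s_i if c_i = 1, None (= chi) otherwise. *)
Definition obs_of (hs : seq S) (cs : seq bool) : seq (option S) :=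
  [seq if p.2 then Some p.1 else None | p <- zip hs cs].

(* summary os = (Delta, last transmitted state) after the observation sequence
   os = o_0..o_t : Delta = t - i and Some s_i for the last i with o_i = Some s_i;
   if no transmission has occurred, Delta = t+1 (time since a virtual time -1)
   and the last transmitted state is None. *)
Definition summary (os : seq (option S)) : nat * option S :=
  foldl (fun dl o => match o with
                     | Some s => (0%N, Some s)
                     | None => (dl.1.+1, dl.2)
                     end) (0%N, None) os.

Variables (P : A -> S -> S -> R) (r : S -> A -> S -> R) (gamma beta : R).

(* General causal (possibly randomized) policies.
   enc hs s cs : probability that c_t = 1, given past states hs = s_0..s_{t-1},
                 current state s = s_t and past decisions cs = c_0..c_{t-1}
                 (which, together with the states, determine the past decoder
                 observations).
   dec os as a : probability that a_t = a, given observations os = o_0..o_t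
                 and past actions as = a_0..a_{t-1}. *)
Variables (enc : seq S -> S -> seq bool -> R)
          (dec : seq (option S) -> seq A -> A -> R).

(* Expected discounted reward collected from time t = size cs during k more
   steps, given the history (hs, s, cs, as_) up to time t. *)
Fixpoint Vk (k : nat) (s : S) (hs : seq S) (cs : seq bool) (as_ : seq A) : R :=
  match k with
  | 0 => 0
  | k'.+1 =>
    \sum_(c : bool)
      (if c then enc hs s cs else 1 - enc hs s cs) *
      \sum_(a : A) dec (obs_of (rcons hs s) (rcons cs c)) as_ a *
        \sum_(s' : S) P a s s' *
          (gamma ^+ size cs * (r s a s' - beta * (c : nat)%:R)
           + Vk k' s' (rcons hs s) (rcons cs c) (rcons as_ a))
  end.

End RemoteControl.

Definition Jfin (R : realType) (S A : finType) (P : A -> S -> S -> R)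
  (r : S -> A -> S -> R) (gamma beta : R) (mu0 : S -> R)
  (enc : seq S -> S -> seq bool -> R) (dec : seq (option S) -> seq A -> A -> R)
  (T : nat) : R :=
  \sum_(s0 : S) mu0 s0 * Vk P r gamma beta enc dec T s0 [::] [::] [::].

Definition Jinf (R : realType) (S A : finType) (P : A -> S -> S -> R)
  (r : S -> A -> S -> R) (gamma beta : R) (mu0 : S -> R)
  (enc : seq S -> S -> seq bool -> R) (dec : seq (option S) -> seq A -> A -> R)
  : R :=
  limn (fun T => Jfin P r gamma beta mu0 enc dec T).

Definition enc_valid (R : realType) (S : finType)
  (enc : seq S -> S -> seq bool -> R) : Prop :=
  forall hs s cs, 0 <= enc hs s cs <= 1.

Definition dec_valid (R : realType) (S A : finType)
  (dec : seq (option S) -> seq A -> A -> R) : Prop :=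
  forall os as_, (forall a, 0 <= dec os as_ a) /\ \sum_(a : A) dec os as_ a = 1.

(* The encoder sees <s_t, Delta_t, s_{t-Delta_t}> where Delta_t is computed
   before the decision c_t (last transmission strictly before t);
   the decoder sees <Delta_t, s_{t-Delta_t}> after observing o_t. *)
Definition enc_struct (R : realType) (S : finType)
  (f : S -> nat -> option S -> bool) : seq S -> S -> seq bool -> R :=
  fun hs s cs =>
    let dl := summary (rcons (obs_of hs cs) None) in
    ((f s dl.1 dl.2 : nat)%:R : R).

Definition dec_struct (R : realType) (S A : finType)
  (g : nat -> option S -> A) : seq (option S) -> seq A -> A -> R :=
  fun os _ a =>
    let dl := summary os in (((a == g dl.1 dl.2) : nat)%:R : R).

From HB Require Import structures.
From mathcomp Require Import all_boot all_order all_algebra.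
From mathcomp Require Import all_classical all_reals all_analysis.
From mathcomp Require Import lra ring.
Set Implicit Arguments. Unset Strict Implicit. Unset Printing Implicit Defensive.
Import Order.TTheory GRing.Theory Num.Theory numFieldNormedType.Exports.
Local Open Scope ring_scope.

(* Between two transmissions the decoder learns nothing, so what any causal
   decoder does after a transmission is a randomized open-loop plan of actions,
   and the process splits into epochs that restart at every transmission.  Fix a
   plan length L and let W approximately solve the epoch Bellman equation, in
   which after transmitting x the decoder commits to the best open-loop plan of
   length L.+1 and the encoder then stops the epoch optimally.  By induction on
   the horizon, a general policy earns at most the expected epoch value of its
   random plan, hence at most the value of a single best plan; the structured
   policy that replays the best plan for the last transmitted state (indexed by
   Delta) and transmits exactly when restarting is worth more than continuing
   earns that value up to the Bellman error.  Letting L grow and the error shrink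
   gives the claim. *)

Section ConvexCombination.
Variables (R : realDomainType) (I : finType) (w : I -> R).
Hypotheses (w_ge0 : forall i, 0 <= w i) (w_sum1 : \sum_i w i = 1).

Lemma inhabited_of_sum1 : inhabited I.
Proof.
case: (pickP I) => [i _|I0]; first exact: inhabits i.
by move: w_sum1; rewrite big_pred0 // => /esym/eqP; rewrite oner_eq0.
Qed.

Lemma convex_sum_cst c : \sum_i w i * c = c.
Proof. by rewrite -mulr_suml w_sum1 mul1r. Qed.

Lemma convex_sum_le X B : (forall i, X i <= B) -> \sum_i w i * X i <= B.
Proof.
by move=> XB; rewrite -[leRHS]convex_sum_cst; apply: ler_sum => i _; exact: ler_wpM2l.
Qed.

Lemma convex_sum_norm_le X B : (forall i, `|X i| <= B) -> `|\sum_i w i * X i| <= B.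
Proof.
move=> XB; apply: le_trans (ler_norm_sum _ _ _) _.
under eq_bigr do rewrite normrM (ger0_norm (w_ge0 _)).
exact: convex_sum_le.
Qed.

Lemma convex_sum_affine k X B : \sum_i w i * (k * X i + B) = k * \sum_i w i * X i + B.
Proof.
under eq_bigr do rewrite mulrDr.
rewrite big_split /= convex_sum_cst mulr_sumr; congr (_ + _).
by apply: eq_bigr => i _; rewrite mulrCA.
Qed.

Lemma convex_sumDr X B : \sum_i w i * (X i + B) = \sum_i w i * X i + B.
Proof.
by rewrite -[in RHS](mul1r (\sum_i _)) -convex_sum_affine; under [RHS]eq_bigr do rewrite mul1r.
Qed.

End ConvexCombination.

Section TwoPointConvexCombination.
Variables (R : realDomainType) (e : R).
Hypothesis e01 : 0 <= e <= 1.

Lemma conv2_le x y B : x <= B -> y <= B -> e * x + (1 - e) * y <= B.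
Proof. by case/andP: e01 => e0 e1 xB yB; nra. Qed.

Lemma conv2_ge x y B : B <= x -> B <= y -> B <= e * x + (1 - e) * y.
Proof. by case/andP: e01 => e0 e1 xB yB; nra. Qed.

Lemma conv2_norm_le x y B : `|x| <= B -> `|y| <= B -> `|e * x + (1 - e) * y| <= B.
Proof.
rewrite !ler_norml => /andP[x1 x2] /andP[y1 y2].
by rewrite conv2_le // conv2_ge.
Qed.

End TwoPointConvexCombination.

Section GeometricLimits.
Local Open Scope classical_set_scope.
Variables (R : realType) (q : R).
Hypotheses (q_ge0 : 0 <= q) (q_lt1 : q < 1).

Let normq_lt1 : `|q| < 1. Proof. by rewrite ger0_norm. Qed.

Lemma cvgn_geometric_increments (u : R ^nat) (C : R) :
  (forall n, `|u n.+1 - u n| <= C * q ^+ n) -> cvgn u.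
Proof.
move=> du; have C_ge0 : 0 <= C by have := du 0%N; rewrite expr0 mulr1; apply: le_trans.
have cvg_tel : cvgn (series (telescope u)).
  apply/normed_cvg/(series_le_cvg (v_ := geometric C q)) => [n|n|n|].
  - exact: normr_ge0.
  - by rewrite /geometric mulr_ge0 ?exprn_ge0.
  - exact: du.
  - exact: is_cvg_geometric_series.
rewrite (_ : u = fun n => u 0%N + series (telescope u) n); last first.
  by apply/funext => n; rewrite -eq_sum_telescope.
by apply: is_cvgD; [exact: is_cvg_cst | exact: cvg_tel].
Qed.

Lemma cvg_add_geometric (c K : R) : (fun n => c + K * q ^+ n) @ \oo --> c.
Proof.
rewrite -[c in _ --> c]addr0; apply: cvgD; first exact: cvg_cst.
exact: (cvg_geometric K normq_lt1).
Qed.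

Lemma limn_le_geometric (u : R ^nat) (c K : R) :
  cvgn u -> (forall n, u n <= c + K * q ^+ n) -> limn u <= c.
Proof.
move=> cu ub; rewrite -(cvg_lim (@Rhausdorff R) (@cvg_add_geometric c K)).
apply: ler_lim => //; first exact: cvgP (@cvg_add_geometric c K).
exact: nearW.
Qed.

Lemma limn_ge_geometric (u : R ^nat) (c K : R) :
  cvgn u -> (forall n, c - K * q ^+ n <= u n) -> c <= limn u.
Proof.
move=> cu lb; have cv := @cvg_add_geometric c (- K).
rewrite -(cvg_lim (@Rhausdorff R) cv); apply: ler_lim => //; first exact: cvgP cv.
by apply: nearW => n; rewrite mulNr lb.
Qed.

Lemma exists_expr_le (X c : R) : 0 < c -> exists n, q ^+ n * X <= c.
Proof.
move=> c_gt0; have [N _ hN] := cvgr0_norm_lt _ (cvg_geometric X normq_lt1) _ c_gt0.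
exists N; rewrite mulrC; apply/ltW/(le_lt_trans (ler_norm _)).
exact: (hN N (leqnn N)).
Qed.

End GeometricLimits.

Section PlanExpectation.
Variables (R : realDomainType) (A : finType).

Definition prob_kernel (D : seq A -> A -> R) :=
  forall u, (forall a, 0 <= D u a) /\ \sum_a D u a = 1.

Fixpoint Eplan (m : nat) (D : seq A -> A -> R) (F : seq A -> R) : R :=
  if m is m'.+1 then
    \sum_a D [::] a * Eplan m' (fun u => D (a :: u)) (fun u => F (a :: u))
  else F [::].

Lemma prob_kernel_cons D a : prob_kernel D -> prob_kernel (fun u => D (a :: u)).
Proof. by move=> hD u. Qed.

Lemma Eplan_cst m D c : prob_kernel D -> Eplan m D (fun _ => c) = c.
Proof.
elim: m D => [|m IH] D hD //=; have [_ D1] := hD [::].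
under eq_bigr do rewrite IH ?prob_kernel_cons //.
exact: convex_sum_cst.
Qed.

Lemma ler_Eplan m D F G : prob_kernel D ->
  (forall u, size u = m -> F u <= G u) -> Eplan m D F <= Eplan m D G.
Proof.
elim: m D F G => [|m IH] D F G hD hFG /=; first exact: hFG.
apply: ler_sum => a _; apply: ler_wpM2l; first by case: (hD [::]).
by apply: IH => [|u su]; [exact: prob_kernel_cons | apply: hFG; rewrite /= su].
Qed.

Lemma EplanD m D F G : Eplan m D (fun u => F u + G u) = Eplan m D F + Eplan m D G.
Proof.
elim: m D F G => [|m IH] D F G //=.
by rewrite -big_split /=; apply: eq_bigr => a _; rewrite IH mulrDr.
Qed.

Lemma EplanZ m D k F : Eplan m D (fun u => k * F u) = k * Eplan m D F.
Proof.
elim: m D F => [|m IH] D F //=.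
by rewrite mulr_sumr; apply: eq_bigr => a _; rewrite IH mulrCA.
Qed.

Lemma Eplan_sum m D (J : finType) (F : J -> seq A -> R) :
  Eplan m D (fun u => \sum_j F j u) = \sum_j Eplan m D (F j).
Proof.
elim: m D F => [|m IH] D F //=.
by rewrite exchange_big /=; apply: eq_bigr => a _; rewrite IH mulr_sumr.
Qed.

Lemma Eplan_sum_affine m D (J : finType) (w c : J -> R) k F : prob_kernel D ->
  Eplan m D (fun u => \sum_j w j * (c j + k * F j u)) =
  \sum_j w j * (c j + k * Eplan m D (F j)).
Proof.
move=> hD; rewrite Eplan_sum; apply: eq_bigr => j _.
by rewrite EplanZ EplanD Eplan_cst // EplanZ.
Qed.

Lemma Eplan_le_max m D F : prob_kernel D ->
  exists u, size u = m /\ Eplan m D F <= F u.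
Proof.
elim: m D F => [|m IH] D F hD; first by exists [::].
have [D0 D1] := hD [::].
have [a0] := inhabited_of_sum1 D1.
pose X a := Eplan m (fun u => D (a :: u)) (fun u => F (a :: u)).
have [a _ Xa_max] := @arg_maxP _ R A a0 xpredT X isT.
have [u [su Xu]] := IH _ (fun u => F (a :: u)) (prob_kernel_cons a hD).
exists (a :: u); split; first by rewrite /= su.
by apply: le_trans Xu; apply: convex_sum_le => // a'; exact: Xa_max.
Qed.

End PlanExpectation.

Section RemoteControl.
Variables (R : realType) (S A : finType).
Variables (P : A -> S -> S -> R) (r : S -> A -> S -> R) (gamma beta : R).
Hypotheses (P_ge0 : forall a s s', 0 <= P a s s')
           (P_sum1 : forall a s, \sum_(s' : S) P a s s' = 1).
Hypotheses (gamma_ge0 : 0 <= gamma) (gamma_lt1 : gamma < 1) (beta_gt0 : 0 < beta).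
Variable mu0 : S -> R.
Hypotheses (mu0_ge0 : forall s, 0 <= mu0 s) (mu0_sum1 : \sum_s mu0 s = 1).

Implicit Types (s x : S) (a : A) (hs : seq S) (cs : seq bool) (acts : seq A).
Implicit Types (W : S -> R) (z c : R) (u v : seq A).

Local Notation V := (Vk P r gamma beta).

Lemma obs_of_rcons hs cs s (c : bool) : size hs = size cs ->
  obs_of (rcons hs s) (rcons cs c) = rcons (obs_of hs cs) (if c then Some s else None).
Proof. by move=> e; rewrite /obs_of zip_rcons // map_rcons. Qed.

Lemma summary_rcons (os : seq (option S)) o : summary (rcons os o) =
  if o is Some s then (0%N, Some s) else ((summary os).1.+1, (summary os).2).
Proof. by rewrite /summary foldl_rcons. Qed.

Lemma dec_struct_sum (g : nat -> option S -> A) os acts (X : A -> R) :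
  \sum_a dec_struct R g os acts a * X a = X (g (summary os).1 (summary os).2).
Proof.
rewrite (bigD1 (g (summary os).1 (summary os).2)) //= /dec_struct /= eqxx mul1r.
by rewrite big1 ?addr0 // => a /negbTE ->; rewrite mul0r.
Qed.

Lemma dec_struct_valid (g : nat -> option S -> A) : dec_valid (dec_struct R g).
Proof.
move=> os acts; split=> [a|]; first by rewrite /dec_struct /= ler0n.
by under eq_bigr do rewrite -[dec_struct _ _ _ _ _]mulr1; rewrite dec_struct_sum.
Qed.

Lemma enc_struct_valid (f : S -> nat -> option S -> bool) : enc_valid (enc_struct R f).
Proof. by move=> hs s cs; rewrite /enc_struct /=; case: (f _ _ _); rewrite ?lexx ?ler01. Qed.

Definition branch enc dec k s hs cs acts (c : bool) :=
  \sum_a dec (obs_of (rcons hs s) (rcons cs c)) acts a *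
    \sum_(s' : S) P a s s' *
      (gamma ^+ size cs * (r s a s' - beta * (c : nat)%:R)
       + V enc dec k s' (rcons hs s) (rcons cs c) (rcons acts a)).

Lemma Vk_succ enc dec k s hs cs acts : V enc dec k.+1 s hs cs acts =
  enc hs s cs * branch enc dec k s hs cs acts true
  + (1 - enc hs s cs) * branch enc dec k s hs cs acts false.
Proof. by rewrite /= big_bool. Qed.

Definition rbound : R := \big[Num.max/0]_(x : S * A * S) `|r x.1.1 x.1.2 x.2|.

Lemma rbound_ge0 : 0 <= rbound.
Proof. exact: bigmax_ge_id. Qed.

Lemma ler_norm_rbound s a s' : `|r s a s'| <= rbound.
Proof. exact: (le_bigmax _ (fun x : S * A * S => `|r x.1.1 x.1.2 x.2|) (s, a, s')). Qed.

Lemma norm_stage_reward_le s a s' (c : bool) :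
  `|r s a s' - beta * (c : nat)%:R| <= rbound + beta.
Proof.
apply: le_trans (ler_normB _ _) _; apply: lerD; first exact: ler_norm_rbound.
by case: c; rewrite /= ?(mulr1, gtr0_norm beta_gt0) ?(mulr0, normr0, ltW beta_gt0).
Qed.

Lemma norm_discounted_reward_le n s a s' (c : bool) :
  `|gamma ^+ n * (r s a s' - beta * (c : nat)%:R)| <= gamma ^+ n * (rbound + beta).
Proof.
rewrite normrM ger0_norm ?exprn_ge0 //.
by apply: ler_wpM2l; [exact: exprn_ge0 | exact: norm_stage_reward_le].
Qed.

Let one_sub_gamma_gt0 : 0 < 1 - gamma. Proof. by rewrite subr_gt0. Qed.
Let one_sub_gamma_neq0 : 1 - gamma != 0. Proof. exact: lt0r_neq0. Qed.

Definition vbound := (rbound + beta) / (1 - gamma).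

Lemma vbound_ge0 : 0 <= vbound.
Proof. by apply: divr_ge0; [rewrite addr_ge0 ?rbound_ge0 ?ltW | exact: ltW]. Qed.

Lemma vbound_fix : rbound + beta + gamma * vbound = vbound.
Proof. by rewrite /vbound; field. Qed.

Section ValidPolicy.
Variables (enc : seq S -> S -> seq bool -> R) (dec : seq (option S) -> seq A -> A -> R).
Hypotheses (enc_ok : enc_valid enc) (dec_ok : dec_valid dec).

Lemma dec_ge0 os acts a : 0 <= dec os acts a.
Proof. by case: (dec_ok os acts) => ->. Qed.

Lemma dec_sum1 os acts : \sum_a dec os acts a = 1.
Proof. by case: (dec_ok os acts). Qed.

Lemma branch_le k s hs cs acts (c : bool) (H : A -> S -> R) (B : R) :
  (forall a s', V enc dec k s' (rcons hs s) (rcons cs c) (rcons acts a)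
                <= gamma ^+ (size cs).+1 * H a s' + B) ->
  branch enc dec k s hs cs acts c <= gamma ^+ size cs *
    \sum_a dec (obs_of (rcons hs s) (rcons cs c)) acts a *
      \sum_(s' : S) P a s s' * (r s a s' - beta * (c : nat)%:R + gamma * H a s') + B.
Proof.
move=> le_child; rewrite -(convex_sum_affine (dec_sum1 _ _)).
apply: ler_sum => a _; apply: ler_wpM2l; first exact: dec_ge0.
rewrite -(convex_sum_affine (P_sum1 a s)); apply: ler_sum => s' _; apply: ler_wpM2l => //.
rewrite [_ * (_ + gamma * _)]mulrDr -addrA lerD2l; apply: le_trans (le_child a s') _.
by rewrite exprSr -mulrA.
Qed.

Lemma branch_ge k s hs cs acts (c : bool) (H : A -> S -> R) (B : R) :
  (forall a s', gamma ^+ (size cs).+1 * H a s' + B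
                <= V enc dec k s' (rcons hs s) (rcons cs c) (rcons acts a)) ->
  gamma ^+ size cs *
    \sum_a dec (obs_of (rcons hs s) (rcons cs c)) acts a *
      \sum_(s' : S) P a s s' * (r s a s' - beta * (c : nat)%:R + gamma * H a s') + B
  <= branch enc dec k s hs cs acts c.
Proof.
move=> le_child; rewrite -(convex_sum_affine (dec_sum1 _ _)).
apply: ler_sum => a _; apply: ler_wpM2l; first exact: dec_ge0.
rewrite -(convex_sum_affine (P_sum1 a s)); apply: ler_sum => s' _; apply: ler_wpM2l => //.
rewrite [_ * (_ + gamma * _)]mulrDr -addrA lerD2l; apply: le_trans _ (le_child a s').
by rewrite exprSr -mulrA.
Qed.

Lemma norm_branch_le k s hs cs acts (c : bool) (B : R) :
  (forall a s', `|gamma ^+ size cs * (r s a s' - beta * (c : nat)%:R)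
           + V enc dec k s' (rcons hs s) (rcons cs c) (rcons acts a)| <= B) ->
  `|branch enc dec k s hs cs acts c| <= B.
Proof.
move=> h; apply: convex_sum_norm_le => [a||a]; [exact: dec_ge0 | exact: dec_sum1 |].
exact: convex_sum_norm_le.
Qed.

Lemma norm_Vk_le k s hs cs acts : `|V enc dec k s hs cs acts| <= gamma ^+ size cs * vbound.
Proof.
elim: k s hs cs acts => [|k IH] s hs cs acts.
  by rewrite normr0 mulr_ge0 ?exprn_ge0 ?vbound_ge0.
rewrite Vk_succ; apply: conv2_norm_le; first exact: enc_ok.
all: apply: norm_branch_le => a s'; apply: le_trans (ler_normD _ _) _.
all: rewrite -vbound_fix [leRHS]mulrDr; apply: lerD.
1,3: exact: norm_discounted_reward_le.
all: by apply: le_trans (IH _ _ _ _) _; rewrite size_rcons exprS -mulrA mulrCA.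
Qed.

Lemma norm_Vk1_le s hs cs acts :
  `|V enc dec 1 s hs cs acts| <= gamma ^+ size cs * (rbound + beta).
Proof.
rewrite Vk_succ; apply: conv2_norm_le; first exact: enc_ok.
all: apply: norm_branch_le => a s'; rewrite [V _ _ 0 _ _ _ _]/= addr0.
all: exact: norm_discounted_reward_le.
Qed.

Lemma norm_Vk_succ_sub k s hs cs acts :
  `|V enc dec k.+1 s hs cs acts - V enc dec k s hs cs acts|
  <= gamma ^+ (size cs + k) * (rbound + beta).
Proof.
elim: k s hs cs acts => [|k IH] s hs cs acts.
  by rewrite [V _ _ 0 _ _ _ _]/= subr0 addn0 norm_Vk1_le.
rewrite Vk_succ [V _ _ k.+1 _ _ _ _]Vk_succ.
set e := enc hs s cs.
have -> : forall x1 x0 y1 y0 : R, e * x1 + (1 - e) * y1 - (e * x0 + (1 - e) * y0)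
                         = e * (x1 - x0) + (1 - e) * (y1 - y0) by move=> *; ring.
apply: conv2_norm_le; first exact: enc_ok.
all: rewrite /branch -sumrB; under eq_bigr do rewrite -mulrBr -sumrB.
all: apply: convex_sum_norm_le => [a||a]; [exact: dec_ge0 | exact: dec_sum1 |].
all: under eq_bigr do rewrite -mulrBr.
all: apply: convex_sum_norm_le => // s'.
all: rewrite opprD addrACA subrr add0r; apply: le_trans (IH _ _ _ _) _.
all: by rewrite size_rcons addSnnS.
Qed.

End ValidPolicy.

Lemma Jfin_cvg enc dec : enc_valid enc -> dec_valid dec ->
  cvgn (Jfin P r gamma beta mu0 enc dec).
Proof.
move=> enc_ok dec_ok; apply: (cvgn_geometric_increments gamma_ge0 gamma_lt1 (C := rbound + beta)).
move=> m; rewrite /Jfin -sumrB.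
under eq_bigr do rewrite -mulrBr.
apply: convex_sum_norm_le => // s0; rewrite mulrC.
by have := norm_Vk_succ_sub enc_ok dec_ok m s0 [::] [::] [::]; rewrite add0n.
Qed.

(* [epochV W z u s]: value at state [s] of the rest of an epoch in which the
   decoder still plays the plan [u] and the encoder stops optimally, stopping at
   [s] being worth [- beta + W s]; when [u] runs out stopping is forced and
   earns the extra [z]. *)
Fixpoint epochV (W : S -> R) (z : R) (u : seq A) s : R :=
  if u is a :: u' then
    Num.max (- beta + W s)
      (\sum_(s' : S) P a s s' * (r s a s' + gamma * epochV W z u' s'))
  else - beta + W s + z.

Definition epochQ W z a u s :=
  \sum_(s' : S) P a s s' * (r s a s' + gamma * epochV W z u s').

Lemma epochV_cons W z a u s :
  epochV W z (a :: u) s = Num.max (- beta + W s) (epochQ W z a u s).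
Proof. by []. Qed.

(* Only plans of length [L.+1] are used; the value [0] on [[::]] is junk. *)
Definition planV W z (v : seq A) x := if v is a :: u then epochQ W z a u x else 0.

Lemma epochQ_shift W1 W2 z1 z2 a u s c : 0 <= c ->
  (forall s', epochV W1 z1 u s' <= epochV W2 z2 u s' + c) ->
  epochQ W1 z1 a u s <= epochQ W2 z2 a u s + gamma * c.
Proof.
move=> c_ge0 le_u; rewrite /epochQ -(convex_sumDr (P_sum1 a s)).
apply: ler_sum => s' _; apply: ler_wpM2l => //.
by rewrite -addrA lerD2l -mulrDr ler_wpM2l.
Qed.

Lemma epochV_shift W1 W2 z c : 0 <= c -> (forall s, W1 s <= W2 s + c) ->
  forall u s, epochV W1 z u s <= epochV W2 z u s + c.
Proof.
move=> c_ge0 le_W; elim=> [|a u IH] s; first by have := le_W s; rewrite /=; lra.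
rewrite !epochV_cons addr_maxl; apply: le_max2; first by rewrite -addrA lerD2l.
apply: le_trans (epochQ_shift a s c_ge0 IH) _.
by rewrite lerD2l -[leRHS]mul1r ler_wpM2r // ltW.
Qed.

Lemma epochV_bonus W z : 0 <= z ->
  forall u s, epochV W z u s <= epochV W 0 u s + gamma ^+ size u * z.
Proof.
move=> z_ge0; elim=> [|a u IH] s; first by rewrite /= addr0 expr0 mul1r.
rewrite !epochV_cons addr_maxl; apply: le_max2; first by rewrite lerDl mulr_ge0 ?exprn_ge0.
by rewrite exprS -mulrA; apply: epochQ_shift; rewrite ?mulr_ge0 ?exprn_ge0.
Qed.

Lemma rbound_div_ge0 : 0 <= rbound / (1 - gamma).
Proof. by rewrite divr_ge0 ?rbound_ge0 ?ltW. Qed.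

Lemma norm_epochQ_le W z a u s B : (forall s', `|epochV W z u s'| <= B) ->
  `|epochQ W z a u s| <= rbound + gamma * B.
Proof.
move=> le_u; apply: convex_sum_norm_le => // s'.
apply: le_trans (ler_normD _ _) _; apply: lerD; first exact: ler_norm_rbound.
by rewrite normrM ger0_norm // ler_wpM2l.
Qed.

Lemma norm_epochV_le W z M : 0 <= M -> 0 <= z -> (forall s, `|W s| <= M) ->
  forall u s, `|epochV W z u s| <= beta + M + z + rbound / (1 - gamma).
Proof.
move=> M_ge0 z_ge0 le_W; have rb_ge0 := rbound_div_ge0; have b_ge0 := ltW beta_gt0.
have le_stop s : `|- beta + W s| <= beta + M.
  by apply: le_trans (ler_normD _ _) _; rewrite normrN gtr0_norm // lerD2l.
elim=> [|a u IH] s.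
  have := le_stop s; rewrite /= !ler_norml => /andP[? ?]; apply/andP; split; lra.
have stable : rbound + gamma * (beta + M + z + rbound / (1 - gamma))
              <= beta + M + z + rbound / (1 - gamma).
  rewrite -subr_ge0 (_ : _ - _ = (1 - gamma) * (beta + M + z)); last by field.
  by apply: mulr_ge0; [exact: ltW | rewrite !addr_ge0].
have := le_trans (norm_epochQ_le a s IH) stable; have := le_stop s.
rewrite epochV_cons !ler_norml => /andP[x1 x2] /andP[y1 y2].
by rewrite le_max ge_max y1 y2 orbT andbT; lra.
Qed.

Lemma planV_shift W1 W2 z c v x : 0 <= c -> (forall s, W1 s <= W2 s + c) ->
  planV W1 z v x <= planV W2 z v x + gamma * c.
Proof.
move=> c_ge0 le_W; case: v => [|a u] /=; first by rewrite add0r mulr_ge0.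
by apply: epochQ_shift => // s'; exact: epochV_shift.
Qed.

Lemma planV_bonus W z v x : 0 <= z -> planV W z v x <= planV W 0 v x + gamma ^+ size v * z.
Proof.
move=> z_ge0; case: v => [|a u] /=; first by rewrite expr0 mul1r add0r.
rewrite exprS -mulrA; apply: epochQ_shift; first by rewrite mulr_ge0 ?exprn_ge0.
by move=> s'; apply: epochV_bonus.
Qed.

Lemma Eplan_planV W z m D x : prob_kernel D ->
  Eplan m.+1 D (fun v => planV W z v x) =
  \sum_a D [::] a * \sum_(s' : S) P a x s' *
    (r x a s' + gamma * Eplan m (fun u => D (a :: u)) (fun u => epochV W z u s')).
Proof.
move=> D_ok /=; apply: eq_bigr => a _; congr (_ * _).
exact: Eplan_sum_affine (prob_kernel_cons a D_ok).
Qed.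

Definition wbound := (rbound / (1 - gamma) + beta) / (1 - gamma).

Lemma wbound_ge0 : 0 <= wbound.
Proof. by apply: divr_ge0; [rewrite addr_ge0 ?rbound_div_ge0 ?ltW | exact: ltW]. Qed.

Lemma norm_planV_le W v x : (forall s, `|W s| <= wbound) -> `|planV W 0 v x| <= wbound.
Proof.
move=> le_W; case: v => [|a u] /=; first by rewrite normr0 wbound_ge0.
apply: le_trans (norm_epochQ_le a x (norm_epochV_le wbound_ge0 (lexx 0) le_W u)) _.
rewrite -subr_ge0 (_ : _ - _ = (1 - gamma) * beta); last by rewrite /wbound; field.
by apply: mulr_ge0; exact: ltW.
Qed.

Section Bellman.
Variables (a0 : A) (L : nat).

Definition best_plan W x : (L.+1).-tuple A :=
  [arg max_(v > nseq_tuple L.+1 a0) planV W 0 v x]%O.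

Definition bellman W x := planV W 0 (best_plan W x) x.

Lemma planV_le_bellman W x v : size v = L.+1 -> planV W 0 v x <= bellman W x.
Proof.
rewrite /bellman /best_plan; case: arg_maxP => // p _ p_max size_v.
exact: (p_max (Tuple (introT eqP size_v))).
Qed.

Lemma norm_bellman_sub W1 W2 c : (forall s, `|W1 s - W2 s| <= c) ->
  forall x, `|bellman W1 x - bellman W2 x| <= gamma * c.
Proof.
move=> le_W x; have c_ge0 : 0 <= c by apply: le_trans (le_W x).
have shift W W' : (forall s, `|W s - W' s| <= c) -> bellman W x <= bellman W' x + gamma * c.
  move=> le_WW'; have le_c s : W s <= W' s + c.
    by have := le_WW' s; rewrite ler_norml => /andP[_]; lra.
  apply: le_trans (@planV_shift W W' 0 c (best_plan W x) x c_ge0 le_c) _.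
  by rewrite lerD2r planV_le_bellman // size_tuple.
have le_W' s : `|W2 s - W1 s| <= c by rewrite distrC.
have := shift _ _ le_W; have := shift _ _ le_W'.
by rewrite ler_norml; lra.
Qed.

Definition value_iter n := iter n bellman (fun _ => 0).

Lemma norm_value_iter_le n s : `|value_iter n s| <= wbound.
Proof.
elim: n s => [|n IH] s; first by rewrite normr0 wbound_ge0.
exact: norm_planV_le.
Qed.

Lemma value_iter_step n s :
  `|value_iter n.+1 s - value_iter n s| <= gamma ^+ n * (2 * wbound).
Proof.
elim: n s => [|n IH] s.
  rewrite expr0 mul1r /= subr0; apply: le_trans (norm_planV_le _ _ _) _.
    by move=> ?; rewrite normr0 wbound_ge0.
  by rewrite ler_peMl ?wbound_ge0 // ler1n.
by rewrite exprS -mulrA; apply: norm_bellman_sub.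
Qed.

Lemma exists_approx_fixpoint delta : 0 < delta ->
  exists W, (forall s, `|W s| <= wbound) /\ (forall s, `|bellman W s - W s| <= delta).
Proof.
move=> delta_gt0; have [n le_n] := exists_expr_le gamma_ge0 gamma_lt1 (2 * wbound) delta_gt0.
exists (value_iter n); split=> [|s]; first exact: norm_value_iter_le.
exact: le_trans (value_iter_step n s) le_n.
Qed.

End Bellman.

Section UpperBound.
Variables (enc : seq S -> S -> seq bool -> R) (dec : seq (option S) -> seq A -> A -> R).
Hypotheses (enc_ok : enc_valid enc) (dec_ok : dec_valid dec).
Variables (W : S -> R) (z K : R) (L : nat).
Hypotheses (K_ge0 : 0 <= K) (vbound_le_stop : forall s, vbound <= - beta + W s + z)
  (epochV_ge : forall u s, - K <= epochV W z u s)
  (planV_le : forall v x, size v = L.+1 -> planV W z v x <= W x).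

Definition dec_after (os : seq (option S)) acts : seq A -> A -> R :=
  fun u a => dec (os ++ nseq (size u) None) (acts ++ u) a.

Lemma dec_after_kernel os acts : prob_kernel (dec_after os acts).
Proof. by move=> u; split=> [a|]; [exact: dec_ge0 | exact: dec_sum1]. Qed.

Lemma dec_after_nil os acts a : dec_after os acts [::] a = dec os acts a.
Proof. by rewrite /dec_after !cats0. Qed.

Lemma dec_after_cons os acts a :
  (fun u => dec_after os acts (a :: u)) = dec_after (rcons os None) (rcons acts a).
Proof. by apply/funext => u; apply/funext => a'; rewrite /dec_after !cat_rcons. Qed.

Definition Vk_upper k := forall m s hs cs acts, size hs = size cs ->
  V enc dec k s hs cs acts <=
  gamma ^+ size cs * Eplan m (dec_after (rcons (obs_of hs cs) None) acts) (epochV W z ^~ s)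
  + gamma ^+ (size cs + k) * K.

Lemma branch_transmit_le k : Vk_upper k -> forall x hs cs acts, size hs = size cs ->
  branch enc dec k x hs cs acts true
  <= gamma ^+ size cs * (- beta + W x) + gamma ^+ (size cs + k.+1) * K.
Proof.
move=> IH x hs cs acts size_hs.
pose D := dec_after (obs_of (rcons hs x) (rcons cs true)) acts.
have D_ok : prob_kernel D := dec_after_kernel _ _.
have le_child a s' : V enc dec k s' (rcons hs x) (rcons cs true) (rcons acts a)
    <= gamma ^+ (size cs).+1 * Eplan L (fun u => D (a :: u)) (epochV W z ^~ s')
       + gamma ^+ (size cs + k.+1) * K.
  have := IH L s' (rcons hs x) (rcons cs true) (rcons acts a).
  by rewrite /D dec_after_cons !size_rcons addSnnS size_hs; apply.
apply: le_trans (branch_le dec_ok le_child) _; rewrite lerD2r ler_wpM2l ?exprn_ge0 //.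
under eq_bigr => a _ do under eq_bigr => s' _ do rewrite /= mulr1 addrAC.
under eq_bigr => a _ do rewrite convex_sumDr // -(dec_after_nil _ acts).
rewrite convex_sumDr; last by have [] := D_ok [::].
rewrite -Eplan_planV // addrC lerD2l.
have [v [size_v le_v]] := Eplan_le_max L.+1 (fun v => planV W z v x) D_ok.
exact: le_trans le_v (planV_le _ size_v).
Qed.

Lemma branch_silent_le k : Vk_upper k -> forall m s hs cs acts, size hs = size cs ->
  branch enc dec k s hs cs acts false
  <= gamma ^+ size cs *
       Eplan m.+1 (dec_after (rcons (obs_of hs cs) None) acts) (fun v => planV W z v s)
     + gamma ^+ (size cs + k.+1) * K.
Proof.
move=> IH m s hs cs acts size_hs.
pose D := dec_after (rcons (obs_of hs cs) None) acts.
have D_ok : prob_kernel D := dec_after_kernel _ _.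
have le_child a s' : V enc dec k s' (rcons hs s) (rcons cs false) (rcons acts a)
    <= gamma ^+ (size cs).+1 * Eplan m (fun u => D (a :: u)) (epochV W z ^~ s')
       + gamma ^+ (size cs + k.+1) * K.
  have := IH m s' (rcons hs s) (rcons cs false) (rcons acts a).
  by rewrite obs_of_rcons // /D dec_after_cons !size_rcons addSnnS size_hs; apply.
apply: le_trans (branch_le dec_ok le_child) _; rewrite lerD2r ler_wpM2l ?exprn_ge0 //.
rewrite Eplan_planV // obs_of_rcons //.
under eq_bigr => a _ do under eq_bigr => s' _ do rewrite /= mulr0 subr0.
by under eq_bigr => a _ do rewrite -(dec_after_nil _ acts).
Qed.

Lemma Vk_upper_all k : Vk_upper k.
Proof.
elim: k => [|k IH] m s hs cs acts size_hs.
  have := ler_Eplan (dec_after_kernel (rcons (obs_of hs cs) None) acts)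
            (fun u _ => epochV_ge u s) (m := m).
  rewrite Eplan_cst => [ge_K|]; last exact: dec_after_kernel.
  rewrite [V _ _ 0 _ _ _ _]/= addn0 -mulrDr; apply: mulr_ge0; [exact: exprn_ge0 | lra].
case: m => [|m].
  apply: le_trans (ler_norm _) (le_trans (norm_Vk_le enc_ok dec_ok _ _ _ _ _) _).
  rewrite -[leLHS]addr0; apply: lerD; last by rewrite mulr_ge0 ?exprn_ge0.
  by rewrite ler_wpM2l ?exprn_ge0 // vbound_le_stop.
pose D := dec_after (rcons (obs_of hs cs) None) acts.
have D_ok : prob_kernel D := dec_after_kernel _ _.
have [e0 e1] := andP (enc_ok hs s cs); set e := enc hs s cs in e0 e1 *.
rewrite Vk_succ; apply: le_trans (lerD (ler_wpM2l e0 (branch_transmit_le IH s acts size_hs))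
  (ler_wpM2l _ (branch_silent_le IH m s acts size_hs))) _; first by rewrite subr_ge0.
set g := gamma ^+ size cs; set B := gamma ^+ (size cs + k.+1) * K.
set Q := Eplan m.+1 D (fun v => planV W z v s).
rewrite (_ : e * (g * (- beta + W s) + B) + (1 - e) * (g * Q + B)
             = g * (e * (- beta + W s) + (1 - e) * Q) + B); last by ring.
rewrite lerD2r ler_wpM2l ?exprn_ge0 // /Q -(Eplan_cst m.+1 (- beta + W s) D_ok).
rewrite -!EplanZ -EplanD; apply: ler_Eplan => // -[//|a u] _.
by rewrite epochV_cons; apply: conv2_le; rewrite ?e0 ?e1 // le_max lexx ?orbT.
Qed.

Lemma Jfin_le_epochV : exists ust, size ust = L /\ forall T,
  Jfin P r gamma beta mu0 enc dec T <= \sum_s mu0 s * epochV W z ust s + K * gamma ^+ T.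
Proof.
pose D := dec_after [:: None] [::].
have [ust [size_ust le_ust]] :=
  Eplan_le_max L (fun u => \sum_s mu0 s * epochV W z u s) (dec_after_kernel [:: None] [::]).
exists ust; split=> // T; rewrite /Jfin.
apply: (@le_trans _ _ (\sum_s mu0 s * (Eplan L D (epochV W z ^~ s) + K * gamma ^+ T))).
  apply: ler_sum => s0 _; apply: ler_wpM2l => //.
  by have := @Vk_upper_all T L s0 [::] [::] [::] erefl; rewrite /= expr0 mul1r add0n mulrC.
rewrite convex_sumDr // lerD2r; apply: le_trans le_ust.
by rewrite Eplan_sum; under [leRHS]eq_bigr do rewrite EplanZ.
Qed.

End UpperBound.

Section LowerBound.
Variables (W : S -> R) (K : R) (a0 : A) (pl : option S -> seq A).
Hypotheses (epochV_le : forall u s, epochV W 0 u s <= K)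
  (le_planV : forall x, W x <= planV W 0 (pl (Some x)) x)
  (pl_neq0 : forall x, pl (Some x) != [::]).

(* [pl (Some x)] is the plan the decoder follows after receiving [x], and
   [pl None] the one it follows before the first transmission; the decoder
   plays [nth a0 (pl xo) Delta], so the head of [pl None] is never played. *)
Definition enc_rule s j xo : bool :=
  if drop j (pl xo) is a :: u then epochQ W 0 a u s < - beta + W s else true.

Definition dec_rule j xo : A := nth a0 (pl xo) j.

Local Notation encS := (enc_struct R enc_rule).
Local Notation decS := (dec_struct R dec_rule).

Definition Vk_lower k := forall s hs cs acts j xo, size hs = size cs ->
  summary (rcons (obs_of hs cs) None) = (j, xo) ->
  gamma ^+ size cs * epochV W 0 (drop j (pl xo)) s - gamma ^+ (size cs + k) * K
  <= V encS decS k s hs cs acts.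

Lemma branch_transmit_ge k : Vk_lower k -> forall x hs cs acts, size hs = size cs ->
  gamma ^+ size cs * (- beta + W x) - gamma ^+ (size cs + k.+1) * K
  <= branch encS decS k x hs cs acts true.
Proof.
move=> IH x hs cs acts size_hs.
case plx: (pl (Some x)) (pl_neq0 x) => [//|a1 u1] _.
have le_child a s' : gamma ^+ (size cs).+1 * epochV W 0 u1 s' - gamma ^+ (size cs + k.+1) * K
    <= V encS decS k s' (rcons hs x) (rcons cs true) (rcons acts a).
  have := IH s' (rcons hs x) (rcons cs true) (rcons acts a) 1%N (Some x).
  rewrite !size_rcons addSnnS plx /= ?drop0; apply; first by rewrite size_hs.
  by rewrite obs_of_rcons // !summary_rcons.
apply: le_trans (branch_ge (dec_struct_valid _) le_child).
rewrite lerD2r ler_wpM2l ?exprn_ge0 // dec_struct_sum obs_of_rcons // summary_rcons.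
under eq_bigr => s' _ do rewrite /= mulr1 addrAC.
by rewrite convex_sumDr // /dec_rule plx /=; have := le_planV x; rewrite plx /= /epochQ; lra.
Qed.

Lemma Vk_lower_all k : Vk_lower k.
Proof.
elim: k => [|k IH] s hs cs acts j xo size_hs sum_j.
  rewrite [V _ _ 0 _ _ _ _]/= addn0 -mulrBr; apply: mulr_ge0_le0; first exact: exprn_ge0.
  by rewrite subr_le0.
rewrite Vk_succ (_ : enc_struct R enc_rule hs s cs = if enc_rule s j xo then 1 else 0); last first.
  by rewrite /enc_struct sum_j; case: enc_rule.
case rule_s: (enc_rule s j xo); rewrite ?subrr ?subr0 ?mul1r ?mul0r ?addr0 ?add0r.
  apply: le_trans (branch_transmit_ge IH s acts size_hs); rewrite lerD2r ler_wpM2l ?exprn_ge0 //.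
  move: rule_s; rewrite /enc_rule; case: (drop j (pl xo)) => [_|a u]; first by rewrite /= addr0.
  by move=> lt_Q; rewrite epochV_cons ge_max lexx ltW.
move: rule_s; rewrite /enc_rule; case pl_j: (drop j (pl xo)) => [//|a u] /negbT.
rewrite -leNgt => le_Q.
have le_child a' s' : gamma ^+ (size cs).+1 * epochV W 0 u s' - gamma ^+ (size cs + k.+1) * K
    <= V encS decS k s' (rcons hs s) (rcons cs false) (rcons acts a').
  have drop_j1 : drop j.+1 (pl xo) = u by rewrite -addn1 addnC -drop_drop pl_j /= drop0.
  have := IH s' (rcons hs s) (rcons cs false) (rcons acts a') j.+1 xo.
  rewrite drop_j1 !size_rcons addSnnS size_hs; apply=> //.
  by rewrite obs_of_rcons // summary_rcons sum_j.
apply: le_trans (branch_ge (dec_struct_valid _) le_child).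
rewrite lerD2r ler_wpM2l ?exprn_ge0 // dec_struct_sum obs_of_rcons // sum_j /dec_rule /=.
rewrite (_ : nth a0 (pl xo) j = a); last by rewrite -[j]addn0 -nth_drop pl_j.
under [leRHS]eq_bigr => s' _ do rewrite mulr0 subr0.
by rewrite ge_max lexx andbT.
Qed.

Lemma Jfin_ge_epochV T :
  \sum_s mu0 s * epochV W 0 (drop 1 (pl None)) s - K * gamma ^+ T
  <= Jfin P r gamma beta mu0 encS decS T.
Proof.
rewrite /Jfin -(convex_sumDr mu0_sum1); apply: ler_sum => s0 _; apply: ler_wpM2l => //.
by have := @Vk_lower_all T s0 [::] [::] [::] 1%N None erefl erefl; rewrite /= expr0 mul1r mulrC.
Qed.

End LowerBound.

Lemma planV_le_of_bellman a0 L W (delta e : R) z : 0 <= e -> 0 <= z ->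
  delta + gamma ^+ L * z <= (1 - gamma) * e ->
  (forall x, bellman a0 L W x <= W x + delta) ->
  forall v x, size v = L.+1 -> planV (fun s => W s + e) z v x <= W x + e.
Proof.
move=> e_ge0 z_ge0 le_e le_W v x size_v.
apply: le_trans (@planV_shift (fun s => W s + e) W z e v x e_ge0 (fun s => lexx _)) _.
apply: le_trans (lerD (planV_bonus W v x z_ge0) (lexx _)) _.
have := planV_le_bellman a0 W x size_v; have := le_W x.
have : gamma ^+ L.+1 * z <= gamma ^+ L * z.
  rewrite exprS -mulrA; apply: ler_piMl; [by rewrite mulr_ge0 ?exprn_ge0 | exact: ltW].
rewrite size_v; lra.
Qed.

Lemma le_planV_of_bellman a0 L W (delta : R) : 0 <= delta ->
  (forall x, W x <= bellman a0 L W x + delta) ->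
  forall x, W x - delta / (1 - gamma)
            <= planV (fun s => W s - delta / (1 - gamma)) 0 (best_plan a0 L W x) x.
Proof.
move=> delta_ge0 le_W x; set e := delta / (1 - gamma).
have e_ge0 : 0 <= e by apply: divr_ge0 => //; exact: ltW.
have delta_e : delta = (1 - gamma) * e by rewrite /e; field.
have le_shift s : W s <= W s - e + e by rewrite subrK.
have := @planV_shift W (fun s => W s - e) 0 e (best_plan a0 L W x) x e_ge0 le_shift.
have := le_W x; rewrite /bellman; lra.
Qed.

(* Large enough that a forced transmission outweighs any policy value. *)
Definition stop_bonus := vbound + beta + wbound.

Lemma stop_bonus_ge0 : 0 <= stop_bonus.
Proof. by rewrite !addr_ge0 ?vbound_ge0 ?wbound_ge0 ?ltW. Qed.

Section NearOptimality.
Variables (enc : seq S -> S -> seq bool -> R) (dec : seq (option S) -> seq A -> A -> R).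
Hypotheses (enc_ok : enc_valid enc) (dec_ok : dec_valid dec).
Variables (a0 : A) (L : nat) (W : S -> R) (delta : R).
Hypotheses (delta_ge0 : 0 <= delta) (W_le : forall s, `|W s| <= wbound).

Lemma Jinf_general_le : (forall x, bellman a0 L W x <= W x + delta) ->
  exists ust, size ust = L /\ Jinf P r gamma beta mu0 enc dec <=
    \sum_s mu0 s * epochV W 0 ust s + 2 * ((delta + gamma ^+ L * stop_bonus) / (1 - gamma)).
Proof.
move=> le_W; set z := stop_bonus; set e := (_ + _) / _.
have z_ge0 : 0 <= z := stop_bonus_ge0.
have e_ge0 : 0 <= e by apply: divr_ge0; [rewrite addr_ge0 ?mulr_ge0 ?exprn_ge0 | exact: ltW].
have delta_e : delta + gamma ^+ L * z = (1 - gamma) * e by rewrite /e; field.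
have le_e : gamma ^+ L * z <= e.
  apply: (@le_trans _ _ (delta + gamma ^+ L * z)); first by rewrite lerDr.
  by rewrite delta_e ler_piMl // gerBl.
pose K := beta + (wbound + e) + z + rbound / (1 - gamma).
have Wup_le s : `|W s + e| <= wbound + e.
  by apply: le_trans (ler_normD _ _) _; rewrite (ger0_norm e_ge0) lerD2r.
have epochV_ge u s : - K <= epochV (fun s => W s + e) z u s.
  have := norm_epochV_le (addr_ge0 wbound_ge0 e_ge0) z_ge0 Wup_le u s.
  by rewrite ler_norml => /andP[].
have K_ge0 : 0 <= K.
  by rewrite /K !addr_ge0 ?vbound_ge0 ?wbound_ge0 ?rbound_div_ge0 ?(ltW beta_gt0).
have stop s : vbound <= - beta + (W s + e) + z.
  have := W_le s; rewrite ler_norml /z /stop_bonus => /andP[W_ge _].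
  by move: e_ge0; clearbody e; lra.
have le_delta : delta + gamma ^+ L * z <= (1 - gamma) * e by rewrite delta_e.
have planV_le := planV_le_of_bellman e_ge0 z_ge0 le_delta le_W.
have [ust [size_ust le_J]] := Jfin_le_epochV enc_ok dec_ok K_ge0 stop epochV_ge planV_le.
exists ust; split=> //.
apply: le_trans (limn_le_geometric gamma_ge0 gamma_lt1 (Jfin_cvg enc_ok dec_ok) le_J) _.
rewrite -(convex_sumDr mu0_sum1); apply: ler_sum => s _; apply: ler_wpM2l => //.
have := @epochV_shift (fun s => W s + e) W z e e_ge0 (fun s => lexx _) ust s.
have := epochV_bonus W z_ge0 ust s; rewrite size_ust.
by move: le_e; clearbody e z; lra.
Qed.

Lemma Jinf_structured_ge ust : (forall x, W x <= bellman a0 L W x + delta) ->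
  exists f g, \sum_s mu0 s * epochV W 0 ust s - delta / (1 - gamma)
              <= Jinf P r gamma beta mu0 (enc_struct R f) (dec_struct R g).
Proof.
move=> le_W; set e := delta / (1 - gamma).
have e_ge0 : 0 <= e by apply: divr_ge0 => //; exact: ltW.
pose W' s := W s - e.
pose pl xo := if xo is Some x then (best_plan a0 L W x : seq A) else a0 :: ust.
pose K := beta + (wbound + e) + 0 + rbound / (1 - gamma).
have W'_le s : `|W' s| <= wbound + e.
  by apply: le_trans (ler_normB _ _) _; rewrite (ger0_norm e_ge0) lerD2r.
have epochV_le u s : epochV W' 0 u s <= K.
  have := norm_epochV_le (addr_ge0 wbound_ge0 e_ge0) (lexx 0) W'_le u s.
  by rewrite ler_norml => /andP[].
have pl_neq0 x : pl (Some x) != [::] by rewrite -size_eq0 size_tuple.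
have le_pl := le_planV_of_bellman delta_ge0 le_W.
exists (enc_rule W' pl), (dec_rule a0 pl).
have cvg_J := Jfin_cvg (enc_struct_valid (enc_rule W' pl)) (dec_struct_valid (dec_rule a0 pl)).
apply: le_trans (limn_ge_geometric gamma_ge0 gamma_lt1 cvg_J
  (@Jfin_ge_epochV W' K a0 pl epochV_le le_pl pl_neq0)).
rewrite /= drop0 -(convex_sumDr mu0_sum1); apply: ler_sum => s _; apply: ler_wpM2l => //.
have le_shift s' : W s' <= W' s' + e by rewrite subrK.
by rewrite lerBlDr; exact: epochV_shift e_ge0 le_shift ust s.
Qed.

End NearOptimality.

Lemma Jinf_near_structured enc dec : enc_valid enc -> dec_valid dec ->
  forall eps : R, 0 < eps -> exists f g,
  Jinf P r gamma beta mu0 enc dec - eps <= Jinf P r gamma beta mu0 (enc_struct R f) (dec_struct R g).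
Proof.
move=> enc_ok dec_ok eps eps_gt0.
have [a0] := inhabited_of_sum1 (dec_sum1 dec_ok [::] [::]).
(* The errors below add up to [2 * (2 * eta) / (1 - gamma) + eta / (1 - gamma) = eps]. *)
pose eta := eps * (1 - gamma) / 5.
have eta_gt0 : 0 < eta by rewrite !mulr_gt0.
have [L le_L] := exists_expr_le gamma_ge0 gamma_lt1 stop_bonus eta_gt0.
have [W [W_le W_fix]] := exists_approx_fixpoint a0 L eta_gt0.
have le_W x : bellman a0 L W x <= W x + eta.
  by have := W_fix x; rewrite ler_norml => /andP[]; lra.
have ge_W x : W x <= bellman a0 L W x + eta.
  by have := W_fix x; rewrite ler_norml => /andP[]; lra.
have [ust [_ le_gen]] := Jinf_general_le enc_ok dec_ok (ltW eta_gt0) W_le le_W.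
have [f [g le_str]] := Jinf_structured_ge (ltW eta_gt0) W_le ust ge_W.
exists f, g.
have gap : 2 * ((eta + gamma ^+ L * stop_bonus) / (1 - gamma)) + eta / (1 - gamma) <= eps.
  have le_L' : (eta + gamma ^+ L * stop_bonus) / (1 - gamma) <= 2 * (eta / (1 - gamma)).
    by rewrite mulrA; apply: ler_wpM2r; [rewrite invr_ge0 ltW | lra].
  have eta_eps : eta / (1 - gamma) = eps / 5 by rewrite /eta; field.
  move: le_L'; rewrite eta_eps; set X := (eta + _) / _; clearbody X; lra.
by move: gap; clearbody eta; lra.
Qed.

End RemoteControl.

Theorem theorem1 (R : realType) (S A : finType)
  (P : A -> S -> S -> R) (r : S -> A -> S -> R) (gamma beta : R)
  (mu0 : S -> R) :
  (forall a s s', 0 <= P a s s') ->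
  (forall a s, \sum_(s' : S) P a s s' = 1) ->
  0 <= gamma < 1 -> 0 < beta ->
  (forall s, 0 <= mu0 s) -> \sum_(s : S) mu0 s = 1 ->
  forall (enc : seq S -> S -> seq bool -> R)
         (dec : seq (option S) -> seq A -> A -> R),
  enc_valid enc -> dec_valid dec ->
  forall eps : R, 0 < eps ->
  exists (f : S -> nat -> option S -> bool) (g : nat -> option S -> A),
    Jinf P r gamma beta mu0 enc dec - eps
    <= Jinf P r gamma beta mu0 (enc_struct R f) (dec_struct R g).
Proof.
move=> P_ge0 P_sum1 /andP[gamma_ge0 gamma_lt1] beta_gt0 mu0_ge0 mu0_sum1.
exact: Jinf_near_structured.
Qed.
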